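(* Let $E$ be a directed graph, $S=M(\mathbb{Z},I)\cup\{0\}$, $w$ a canonical weight mapping on $E$, and $e$ a nonzero idempotent of $S$. Let $S_E=\{s\in S\setminus\{0\}:\ w(\mu)=s \text{ for some } \mu\in E^*\}$ and $S_e=\{s\in S_E: ss^{-1}=e\}$, and for $s,t\in S_e$ put $s\le t$ iff every path of weight $t$ contains an initial subpath of weight $s$. Then $S_e$ is a directed set with respect to $\le$.
   Context: Directed graph $E=(E^0,E^1,\mathrm{r},\mathrm{s})$; $E^*$ is the set of paths (finite sequences $\alpha_1\cdots\alpha_k$ of edges with $\mathrm{r}(\alpha_i)=\mathrm{s}(\alpha_{i+1})$, vertices being paths of length $0$); initial subpaths of $\alpha_1\cdots\alpha_k$ are $\mathrm{s}(\alpha_1)$ and $\alpha_1\cdots\alpha_m$, $m\le k$. $M(\mathbb{Z},I)=I\times\mathbb{Z}\times I$ with $(i,a,j)(k,b,l)=(i,a+b,l)$ if $j=k$, else undefined; $S=M(\mathbb{Z},I)\cup\{0\}$ with undefined products $0$, $0$ absorbing; $(i,a,j)^{-1}=(j,-a,i)$. Canonical weight mapping: each vertex gets weight $(i,0,i)$, each edge weight $(i,1,j)$, $w(\mathrm{s}(\alpha))w(\alpha)=w(\alpha)=w(\alpha)w(\mathrm{r}(\alpha))$; for each nonzero idempotent $f$ all edges whose source has weight $f$ have the same weight and all edges whose range has weight $f$ have the same weight; $w(\alpha_1\cdots\alpha_k)=w(\alpha_1)\cdots w(\alpha_k)$. A directed set is a set with a reflexive transitive relation in which any two elements have an upper bound.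 *)

From Stdlib Require Import ZArith.
From mathcomp Require Import all_boot.
Set Implicit Arguments. Unset Strict Implicit. Unset Printing Implicit Defensive.

(* The semigroup S = M(Z,I) u {0}: None is 0, Some (i,a,j) is (i,a,j). *)
Definition Sg (I : eqType) := option (I * Z * I).

Definition smul (I : eqType) (x y : Sg I) : Sg I :=
  match x, y with
  | Some (i, a, j), Some (k, b, l) =>
      if j == k then Some (i, (a + b)%Z, l) else None
  | _, _ => None
  end.

Definition sinv (I : eqType) (x : Sg I) : Sg I :=
  match x with
  | Some (i, a, j) => Some (j, (- a)%Z, i)
  | None => None
  end.

Definition nonzero_idem (I : eqType) (f : Sg I) : Prop :=
  f <> None /\ smul f f = f.

(* A directed graph E = (V, Ed, r, s).  A path is a pair (v, l) where l is a
   list of edges, with s(first edge) = v and r(a_i) = s(a_{i+1});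
   (v, [::]) is the vertex v seen as a path of length 0. *)
Fixpoint is_path (V Ed : Type) (r s : Ed -> V) (v : V) (l : seq Ed) : Prop :=
  match l with
  | [::] => True
  | a :: l' => s a = v /\ is_path r s (r a) l'
  end.

Definition path_weight (I : eqType) (V Ed : Type)
  (wv : V -> Sg I) (we : Ed -> Sg I) (v : V) (l : seq Ed) : Sg I :=
  match l with
  | [::] => wv v
  | a :: l' => foldl (fun acc b => smul acc (we b)) (we a) l'
  end.

Definition canonical_weight (I : eqType) (V Ed : Type) (r s : Ed -> V)
  (wv : V -> Sg I) (we : Ed -> Sg I) : Prop :=
  (forall v, exists i, wv v = Some (i, 0%Z, i)) /\
  (forall a, exists i j, we a = Some (i, 1%Z, j)) /\
  (forall a, smul (wv (s a)) (we a) = we a /\ we a = smul (we a) (wv (r a))) /\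
  (forall f, nonzero_idem f ->
     (forall a b, wv (s a) = f -> wv (s b) = f -> we a = we b) /\
     (forall a b, wv (r a) = f -> wv (r b) = f -> we a = we b)).

Definition in_SE (I : eqType) (V Ed : Type) (r s : Ed -> V)
  (wv : V -> Sg I) (we : Ed -> Sg I) (x : Sg I) : Prop :=
  x <> None /\ exists v l, is_path r s v l /\ path_weight wv we v l = x.

Definition in_Se (I : eqType) (V Ed : Type) (r s : Ed -> V)
  (wv : V -> Sg I) (we : Ed -> Sg I) (e x : Sg I) : Prop :=
  in_SE r s wv we x /\ smul x (sinv x) = e.

(* x <= y iff every path of weight y has an initial subpath of weight x;
   the initial subpaths of (v, l) are (v, take m l), m <= size l
   (m = 0 gives the source vertex). *)
Definition wle (I : eqType) (V Ed : Type) (r s : Ed -> V)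
  (wv : V -> Sg I) (we : Ed -> Sg I) (x y : Sg I) : Prop :=
  forall v l, is_path r s v l -> path_weight wv we v l = y ->
    exists m, m <= size l /\ path_weight wv we v (take m l) = x.

Definition directed_on (T : Type) (P : T -> Prop) (le : T -> T -> Prop) : Prop :=
  (forall x, P x -> le x x) /\
  (forall x y z, P x -> P y -> P z -> le x y -> le y z -> le x z) /\
  (forall x y, P x -> P y -> exists z, P z /\ le x z /\ le y z).

(* Under a canonical weight mapping, the weight of a path (v, l) is
   (i, |l|, j), where wv v = (i, 0, i), and it depends only on wv v and |l|:
   the edges leaving vertices of equal weight have equal weight, hence lead
   to vertices of equal weight again.  For x in S_e we have x x^-1 = (i,0,i),
   so every path of weight x starts at a vertex of weight e.  Consequently,
   if x and y in S_e are realised by paths of lengths n <= n', the first n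
   edges of any path of weight y form a path of weight x: the order is total
   on S_e, and a total preorder is directed. *)
From Stdlib Require Import ZArith Lia.
From mathcomp Require Import all_boot.

Set Implicit Arguments. Unset Strict Implicit.

Lemma directed_on_total (T : Type) (P : T -> Prop) (le : T -> T -> Prop) :
  (forall x, P x -> le x x) ->
  (forall x y z, P x -> P y -> P z -> le x y -> le y z -> le x z) ->
  (forall x y, P x -> P y -> le x y \/ le y x) ->
  directed_on P le.
Proof.
move=> le_refl le_trans le_total; split=> //; split=> // x y Px Py.
case: (le_total x y Px Py) => [lexy | leyx].
  by exists y; do !split => //; apply: le_refl.
by exists x; do !split => //; apply: le_refl.
Qed.

Lemma eq_foldl_map (A B C : Type) (f : C -> B -> C) (h : A -> B) z s s' :
  map h s = map h s' ->
  foldl (fun acc x => f acc (h x)) z s = foldl (fun acc x => f acc (h x)) z s'.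
Proof. by elim: s s' z => [|a s IHs] [|a' s'] z //= [-> /IHs ->]. Qed.

Section PathWeights.
Variables (I : eqType) (V Ed : Type) (r s : Ed -> V).
Variables (wv : V -> Sg I) (we : Ed -> Sg I).

Lemma is_path_take v l m : is_path r s v l -> is_path r s v (take m l).
Proof.
elim: l v m => [|a l IHl] v [|m] //= [sa_v pl]; split => //; exact: IHl.
Qed.

Lemma wle_refl x : wle r s wv we x x.
Proof. by move=> v l _ wl; exists (size l); rewrite leqnn take_size. Qed.

Lemma wle_trans x y z :
  wle r s wv we x y -> wle r s wv we y z -> wle r s wv we x z.
Proof.
move=> lexy leyz v l pl wl.
have [m [_ wm]] := leyz v l pl wl.
have [m' [le_m'_m wm']] := lexy v (take m l) (is_path_take m pl) wm.
have le_m' : m' <= minn m (size l) by rewrite size_take_min in le_m'_m.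
exists m'; split; first exact: leq_trans le_m' (geq_minr _ _).
by rewrite -(@take_takel _ m' m) // (leq_trans le_m') ?geq_minl.
Qed.

Hypothesis CW : canonical_weight r s wv we.

Lemma edge_weight a : exists i j, [/\ wv (s a) = Some (i, 0%Z, i),
  wv (r a) = Some (j, 0%Z, j) & we a = Some (i, 1%Z, j)].
Proof.
case: CW => wvE [weE [we_ends _]].
have [i wsa] := wvE (s a); have [j wra] := wvE (r a).
have [i' [j' wa]] := weE a; have [wsa_a wa_ra] := we_ends a.
rewrite wsa wa /= in wsa_a; case: eqP wsa_a => // eq_i _.
rewrite wa wra /= in wa_ra; case: eqP wa_ra => // eq_j _.
by exists i, j; rewrite wsa wra wa -eq_i eq_j.
Qed.

Lemma foldl_edge_weight u l i n k :
  wv u = Some (k, 0%Z, k) -> is_path r s u l ->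
  exists j, foldl (fun acc b => smul acc (we b)) (Some (i, n, k)) l
            = Some (i, (n + Z.of_nat (size l))%Z, j).
Proof.
elim: l u n k => [|a l IHl] u n k wu /=; first by exists k; rewrite Z.add_0_r.
move=> [sa_u pl]; have [i' [j [wsa wra wa]]] := edge_weight a.
rewrite sa_u wu in wsa; case: wsa => eq_k; rewrite wa -eq_k /= eqxx.
have [j' ->] := IHl _ (n + 1)%Z _ wra pl.
by exists j'; congr (Some (_, _, _)); lia.
Qed.

Lemma path_weightE v l : is_path r s v l -> exists i j,
  wv v = Some (i, 0%Z, i) /\ path_weight wv we v l = Some (i, Z.of_nat (size l), j).
Proof.
case: l => [_|a l [sa_v pl]] /=.
  by case: CW => wvE _; have [i wi] := wvE v; exists i, i.
have [i [j [wsa wra ->]]] := edge_weight a.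
have [j' ->] := foldl_edge_weight i 1 wra pl.
exists i, j'; split; first by rewrite -sa_v.
by congr (Some (_, _, _)); lia.
Qed.

Lemma size_path_weight_inj v l v' l' :
  is_path r s v l -> is_path r s v' l' ->
  path_weight wv we v l = path_weight wv we v' l' -> size l = size l'.
Proof.
move=> /path_weightE[i [j [_ ->]]] /path_weightE[i' [j' [_ ->]]] [_ eq_size _].
exact: Nat2Z.inj.
Qed.

Lemma edge_weights_det v l v' l' :
  is_path r s v l -> is_path r s v' l' -> size l = size l' ->
  wv v = wv v' -> map we l = map we l'.
Proof.
elim: l v l' v' => [|a l IHl] v [|a' l'] v' //= [sa_v pl] [sa'_v' pl'] [eq_size] wvv'.
case: CW => wvE [_ [_ same_source]].
have [i wi] := wvE v.
have idem_v : nonzero_idem (wv v) by rewrite wi; split => //=; rewrite eqxx.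
have we_aa' : we a = we a' by apply: (proj1 (same_source _ idem_v)); rewrite ?sa_v ?sa'_v'.
have [i1 [j [_ wra wa]]] := edge_weight a; have [i2 [j' [_ wra' wa']]] := edge_weight a'.
rewrite we_aa' (IHl (r a) l' (r a')) //.
by rewrite wra wra'; move: we_aa'; rewrite wa wa' => -[_ ->].
Qed.

Lemma path_weight_det v l v' l' :
  is_path r s v l -> is_path r s v' l' -> size l = size l' ->
  wv v = wv v' -> path_weight wv we v l = path_weight wv we v' l'.
Proof.
move=> pl pl' eq_size wvv'; have := edge_weights_det pl pl' eq_size wvv'.
case: l l' pl pl' eq_size => [|a l] [|a' l'] //= _ _ _ [-> map_ll'].
exact: eq_foldl_map.
Qed.

Variable e : Sg I.

Lemma in_Se_source_weight x v l :
  in_Se r s wv we e x -> is_path r s v l -> path_weight wv we v l = x -> wv v = e.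
Proof.
move=> [_ <-] /path_weightE[i [j [wi ->]]] <- /=.
by rewrite eqxx Z.add_opp_diag_r.
Qed.

Lemma wle_in_Se_of_size x y v l v' l' :
  in_Se r s wv we e x -> in_Se r s wv we e y ->
  is_path r s v l -> path_weight wv we v l = x ->
  is_path r s v' l' -> path_weight wv we v' l' = y ->
  size l <= size l' -> wle r s wv we x y.
Proof.
move=> Sex Sey pl wl pl' wl' le_size u k pk wk.
have size_k : size k = size l' by apply: size_path_weight_inj pk pl' _; rewrite wk.
exists (size l); split; first by rewrite size_k.
rewrite -wl; apply: (path_weight_det (is_path_take _ pk) pl).
  by rewrite size_take_min size_k; apply/minn_idPl.
by rewrite (in_Se_source_weight Sex pl wl) (in_Se_source_weight Sey pk wk).
Qed.

Lemma wle_in_Se_total x y : in_Se r s wv we e x -> in_Se r s wv we e y ->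
  wle r s wv we x y \/ wle r s wv we y x.
Proof.
move=> Sex Sey; have [[_ [v [l [pl wl]]]] _] := Sex.
have [[_ [v' [l' [pl' wl']]]] _] := Sey.
case: (leqP (size l) (size l')) => [le_size | /ltnW le_size].
  by left; apply: (wle_in_Se_of_size Sex Sey pl wl pl' wl').
by right; apply: (wle_in_Se_of_size Sey Sex pl' wl' pl wl).
Qed.

End PathWeights.

Theorem lemma5p7 (I : eqType) (V Ed : Type) (r s : Ed -> V)
  (wv : V -> Sg I) (we : Ed -> Sg I) (e : Sg I) :
  canonical_weight r s wv we ->
  nonzero_idem e ->
  directed_on (in_Se r s wv we e) (wle r s wv we).
Proof.
move=> CW _; apply: directed_on_total.
- by move=> x _; apply: wle_refl.
- by move=> x y z _ _ _; apply: wle_trans.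
- exact: wle_in_Se_total.
Qed.
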